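(* Let $D$ be a digraph with vertex set $\{v_1,\ldots,v_n\}$. For $i=1,\ldots,n$ let $d_i^+=|N^+(v_i)|$ and $d_i^-=|N^-(v_i)|$ be the out-degree and in-degree of $v_i$, and let $d_i=|N^+(v_i)\cup N^-(v_i)|$ be the degree of $v_i$ (the number of vertices adjacent to $v_i$). Then $$\alpha(D)\geq \sum_{i=1}^n \left( \frac{1}{1+d_i^+} + \frac{1}{1+d_i^-} - \frac{1}{1+d_i}\right).$$
   Context: All digraphs are finite, loopless and strict (for distinct vertices $u,v$ there is at most one edge from $u$ to $v$; edges in both directions are allowed). $N^+(v)$ and $N^-(v)$ denote the sets of out-neighbours and in-neighbours of $v$. A subset $S\subseteq V(D)$ is acyclic if the induced subdigraph $D[S]$ contains no directed cycle. The independence number $\alpha(D)$ is the maximum size of an acyclic subset of $V(D)$. *)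

From mathcomp Require Import all_boot all_order all_algebra.
Set Implicit Arguments. Unset Strict Implicit. Unset Printing Implicit Defensive.

(* A digraph on a finite vertex type V is given by its edge relation
   e : rel V (e u v means there is an edge u -> v). A relation automatically
   gives a strict digraph (at most one edge u -> v); looplessness is the
   hypothesis irreflexive e. *)

Definition outN (V : finType) (e : rel V) (v : V) : {set V} := [set w | e v w].
Definition inN (V : finType) (e : rel V) (v : V) : {set V} := [set u | e u v].

(* Since the vertices are distinct, such a cycle has length at most #|V|, so
   we quantify over tuples of length n <= #|V| to obtain a boolean predicate. *)
Definition has_dicycle_in (V : finType) (e : rel V) (S : {set V}) : bool :=
  [exists n : 'I_#|V|.+1, exists c : n.-tuple V,
     [&& (0 < n)%N, uniq c, all (fun x => x \in S) c & cycle e c]].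

Definition acyclic_set (V : finType) (e : rel V) (S : {set V}) : bool :=
  ~~ has_dicycle_in e S.

Definition alpha (V : finType) (e : rel V) : nat :=
  \max_(S : {set V} | acyclic_set e S) #|S|.

From mathcomp Require Import all_boot all_order all_algebra.
From mathcomp Require Import ring.
Import GRing.Theory Num.Theory Order.TTheory.
Local Open Scope ring_scope.
Set Implicit Arguments. Unset Strict Implicit. Unset Printing Implicit Defensive.

(* Let f k = 1/(1+k) and, for U a set of vertices, let F U (cw_bound U) be the
   right-hand side computed in D[U].  For any loopless neighbourhood map A,
   deleting each vertex x of U in turn and summing
   \sum_(v in U) f #|A v :&: U| over the results gives #|U| times that sum,
   up to the indicators [A x :&: U == set0].  For the out-, in- and full
   neighbourhoods these indicators combine, by inclusion-exclusion, into the
   indicator that x is a source or a sink of D[U].  Averaging yields an x with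
   F U <= F (U :\ x) + [x is a source or sink of D[U]]; by induction D[U :\ x]
   has an acyclic set of size at least F (U :\ x), and a source or sink of
   D[U] can be added to it without closing a cycle. *)

Section Weights.

Variable R : numFieldType.

Definition weight (k : nat) : R := (1 + k%:R)^-1.

Lemma weight_deletion_sum (d m : nat) :
  weight d.-1 *+ d + weight d *+ m + (d == 0)%:R = (d + m).+1%:R * weight d.
Proof.
rewrite /weight; case: d => [|k].
  by rewrite mulr0n add0r add0n addr0 invr1 mulr1 eqxx -natr1.
rewrite /= addr0 !nat1r -[_ *+ k.+1]mulr_natl -[_ *+ m]mulr_natl.
by rewrite mulfV ?pnatr_eq0 // -addSn natrD mulrDl mulfV ?pnatr_eq0.
Qed.

End Weights.

Section DeletionIdentity.

Variables (R : numFieldType) (V : finType) (A : V -> {set V}).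
Hypothesis A_irr : forall v, v \notin A v.

Definition wsum (U : {set V}) : R := \sum_(v in U) weight R #|A v :&: U|.

Lemma wsum_vertex_deletions (U : {set V}) v : v \in U ->
  \sum_(x in U :\ v) weight R #|A v :&: (U :\ x)| + (A v :&: U == set0)%:R
  = #|U|%:R * weight R #|A v :&: U|.
Proof.
move=> vU; set B := A v :&: U.
have BUv : B \subset U :\ v.
  apply/subsetP => x; rewrite !inE => /andP[xA ->]; rewrite andbT.
  by apply: contraTneq xA => ->; apply: A_irr.
have cardB x : #|A v :&: (U :\ x)| = (#|B| - (x \in B))%N.
  by rewrite setIDA (cardsD1 x B) addKn.
rewrite (big_setID B) /= (setIidPr BUv).
under eq_bigr => x xB do rewrite cardB xB subn1.
under [\sum_(i in U :\ v :\: B) _]eq_bigr => x xB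
  do rewrite cardB (negbTE (setDP xB).2) subn0.
have cardU : #|U| = (#|B| + #|U :\ v :\: B|).+1.
  by rewrite (cardsD1 v U) vU -(cardsID B (U :\ v)) (setIidPr BUv).
by rewrite !sumr_const -cards_eq0 cardU weight_deletion_sum.
Qed.

Lemma wsum_deletions (U : {set V}) :
  \sum_(x in U) (wsum (U :\ x) + (A x :&: U == set0)%:R) = #|U|%:R * wsum U.
Proof.
rewrite big_split /= /wsum mulr_sumr.
rewrite (exchange_big_dep (mem U)) => [|x v _ /setD1P[]//].
rewrite -big_split /=; apply: eq_bigr => v vU.
rewrite -wsum_vertex_deletions //; congr (_ + _); apply: eq_bigl => x.
by rewrite !inE vU andbT andbC eq_sym.
Qed.

End DeletionIdentity.

Lemma exists_ge_mean (R : realDomainType) (I : finType) (U : {set I})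
    (a : I -> R) (b : R) :
  U != set0 -> \sum_(x in U) a x = #|U|%:R * b -> exists2 x, x \in U & b <= a x.
Proof.
move=> /set0Pn[x0 x0U] sum_a.
have [/exists_inP[x xU le_bx]|/exists_inPn lt_ab] := boolP [exists x in U, b <= a x].
  by exists x.
have : \sum_(x in U) a x < \sum_(x in U) b.
  apply: ltr_sum => [|x xU]; first by apply/hasP; exists x0; rewrite ?mem_index_enum.
  by rewrite ltNge lt_ab.
by rewrite sum_a sumr_const mulr_natl ltxx.
Qed.

Section Digraph.

Variables (V : finType) (e : rel V).

Lemma has_dicycle_inP (S : {set V}) :
  reflect (exists c : seq V, [&& c != [::], uniq c, all (mem S) c & cycle e c])
          (has_dicycle_in e S).
Proof.
apply: (iffP existsP) => [[n /existsP[c /and4P[n_gt0 uc Sc cyc]]]|[c]].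
  by exists c; rewrite -size_eq0 size_tuple -lt0n n_gt0 uc Sc cyc.
case/and4P=> c0 uc Sc cyc.
have size_c : (size c < #|V|.+1)%N by rewrite ltnS -(card_uniqP uc) max_card.
exists (Ordinal size_c); apply/existsP; exists (in_tuple c).
by rewrite /= lt0n size_eq0 c0 uc Sc cyc.
Qed.

Lemma acyclic_set0 : acyclic_set e set0.
Proof.
by apply/has_dicycle_inP => -[[|x c] /and4P[//= _ _ /andP[]]]; rewrite inE.
Qed.

Definition source_or_sink (U : {set V}) (x : V) : bool :=
  (outN e x :&: U == set0) || (inN e x :&: U == set0).

Lemma acyclic_setU1 (U S : {set V}) x :
  S \subset U -> x \in U -> source_or_sink U x ->
  acyclic_set e S -> acyclic_set e (x |: S).
Proof.
move=> SU xU xss /has_dicycle_inP noS; apply/has_dicycle_inP.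
move=> -[c /and4P[c0 uc Sxc cyc]].
have cU : {subset c <= U}.
  by move=> y /(allP Sxc) /setU1P[->|/(subsetP SU)].
have [xc|xNc] := boolP (x \in c).
  have outx : next c x \in outN e x :&: U.
    by rewrite !inE (next_cycle cyc xc) cU ?mem_next.
  have inx : prev c x \in inN e x :&: U.
    by rewrite !inE (prev_cycle cyc xc) cU ?mem_prev.
  by case/orP: xss => /eqP E; [move: outx | move: inx]; rewrite E inE.
apply: noS; exists c; rewrite c0 uc cyc andbT /=.
apply/allP => y yc; have /setU1P[yx|//] := allP Sxc y yc.
by move: xNc; rewrite -yx yc.
Qed.

End Digraph.

Section CaroWeiBound.

Variables (R : realFieldType) (V : finType) (e : rel V).
Hypothesis e_irr : irreflexive e.

Definition adjN (v : V) : {set V} := outN e v :|: inN e v.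

Definition cw_bound (U : {set V}) : R :=
  wsum R (outN e) U + wsum R (inN e) U - wsum R adjN U.

Lemma cw_bound_deletions (U : {set V}) :
  \sum_(x in U) (cw_bound (U :\ x) + (source_or_sink e U x)%:R)
  = #|U|%:R * cw_bound U.
Proof.
have indicatorE x : (source_or_sink e U x)%:R =
    (outN e x :&: U == set0)%:R + (inN e x :&: U == set0)%:R
    - (adjN x :&: U == set0)%:R :> R.
  rewrite /source_or_sink /adjN setIUl setU_eq0.
  by case: (_ == set0); case: (_ == set0); ring.
have irr_out v : v \notin outN e v by rewrite inE e_irr.
have irr_in v : v \notin inN e v by rewrite inE e_irr.
have irr_adj v : v \notin adjN v by rewrite !inE e_irr.
rewrite /cw_bound mulrBr mulrDr -(wsum_deletions _ irr_out).
rewrite -(wsum_deletions _ irr_in) -(wsum_deletions _ irr_adj).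
rewrite -big_split -sumrB /=; apply: eq_bigr => x _; rewrite indicatorE; ring.
Qed.

Lemma cw_boundT : cw_bound [set: V] =
  \sum_v (weight R #|outN e v| + weight R #|inN e v| - weight R #|adjN v|).
Proof.
rewrite /cw_bound /wsum -big_split -sumrB /=.
by apply: eq_big => [v|v _]; rewrite ?in_setT // !setIT.
Qed.

Lemma exists_acyclic_ge_cw_bound (U : {set V}) :
  exists2 S : {set V}, S \subset U & acyclic_set e S && (cw_bound U <= #|S|%:R).
Proof.
elim: {U}#|U| {-2}U (erefl #|U|) => [|n IH] U cardU.
  have -> : U = set0 by apply/eqP; rewrite -cards_eq0 cardU.
  exists set0 => //.
  by rewrite acyclic_set0 /cw_bound /wsum !big_set0 addr0 subrr ler0n.
have U0 : U != set0 by rewrite -card_gt0 cardU.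
have [x xU] := exists_ge_mean U0 (cw_bound_deletions U).
have cardUx : #|U :\ x| = n by move: cardU; rewrite (cardsD1 x U) xU => -[].
have [S SUx /andP[acS le_S]] := IH _ cardUx.
have SU : S \subset U := subset_trans SUx (subD1set U x).
have [xss le_U|_] := boolP (source_or_sink e U x); last first.
  by rewrite addr0 => le_U; exists S; rewrite // acS (le_trans le_U).
exists (x |: S); first by rewrite subUset sub1set xU.
have xNS : x \notin S by apply/negP => /(subsetP SUx); rewrite !inE eqxx.
rewrite (acyclic_setU1 SU) //= cardsU1 xNS natrD addrC.
by apply: le_trans le_U _; rewrite lerD2r.
Qed.

End CaroWeiBound.

Theorem mainTheorem1 (V : finType) (e : rel V) (Hloop : irreflexive e) :
  (alpha e)%:R >=
  \sum_(v : V) ((1 + #|outN e v|%:R)^-1 + (1 + #|inN e v|%:R)^-1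
                - (1 + #|outN e v :|: inN e v|%:R)^-1 : rat).
Proof.
have [S _ /andP[acS le_S]] := exists_acyclic_ge_cw_bound rat Hloop [set: V].
rewrite cw_boundT in le_S; apply: (le_trans le_S).
by rewrite ler_nat; apply: leq_bigmax_cond acS.
Qed.
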